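(* Let $\mathcal Q\in\mathbb M_{\mathrm{TS}}$ and $v\in\mathsf T(\mathcal Q)$, and let $Q_v$ be the unique element of $\mathcal Q$ with $v\in\mathsf T(Q_v)$. Then there exist unique parameters $j\in\{1,2\}$ and $q\in(0,1)$ such that $v\in\mathsf V(Q')$ for every $Q'\in\mathrm{bisect}_{j,q}(Q_v)$. For these parameters, the mesh $\tilde{\mathcal Q}=(\mathcal Q\setminus\{Q_v\})\cup\mathrm{bisect}_{j,q}(Q_v)$ belongs to $\mathbb M_{\mathrm{TS}}$ and satisfies $v\notin\mathsf T(\tilde{\mathcal Q})$.
   Context: Let $M,N\in\mathbb N$ and $\mathcal Q_0=\{[m-1,m]\times[n-1,n]: m\in\{1,\dots,M\},\ n\in\{1,\dots,N\}\}$. For a rectangle $Q=[x,x+\tilde x]\times[y,y+\tilde y]$, $j\in\{1,2\}$ and $0<q<1$, define $\mathrm{bisect}_{j,q}(Q)=\{[x,x+q\tilde x]\times[y,y+\tilde y],\ [x+q\tilde x,x+\tilde x]\times[y,y+\tilde y]\}$ if $j=1$ and $\mathrm{bisect}_{j,q}(Q)=\{[x,x+\tilde x]\times[y,y+q\tilde y],\ [x,x+\tilde x]\times[y+q\tilde y,y+\tilde y]\}$ if $j=2$. The mesh class $\mathbb M_{\mathrm{TS}}$ is the smallest set of finite sets of closed rectangles such that $\mathcal Q_0\in\mathbb M_{\mathrm{TS}}$ and, whenever $\mathcal Q\in\mathbb M_{\mathrm{TS}}$, $Q\in\mathcal Q$, $j\in\{1,2\}$, $0<q<1$, also $(\mathcal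 Q\setminus\{Q\})\cup\mathrm{bisect}_{j,q}(Q)\in\mathbb M_{\mathrm{TS}}$. For $Q=[x,x+\tilde x]\times[y,y+\tilde y]$ define the vertex set $\mathsf V(Q)=\{x,x+\tilde x\}\times\{y,y+\tilde y\}$. For a mesh $\mathcal Q$, $\mathsf V(\mathcal Q)=\bigcup_{Q\in\mathcal Q}\mathsf V(Q)$; for $Q\in\mathcal Q$, $\mathsf T(Q)=(\mathsf V(\mathcal Q)\cap Q)\setminus\mathsf V(Q)$ and $\mathsf T(\mathcal Q)=\bigcup_{Q\in\mathcal Q}\mathsf T(Q)$ (T-junctions). (For each $v\in\mathsf T(\mathcal Q)$ there is exactly one $Q_v\in\mathcal Q$ with $v\in\mathsf T(Q_v)$.) *)

From Stdlib Require Import Reals.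
Open Scope R_scope.

(* A rectangle [x, x + w] x [y, y + h], stored by (x, y, w, h). *)
Record rect := mkRect { rx : R; ry : R; rw : R; rh : R }.

Definition point := (R * R)%type.

(* A mesh: a set of rectangles (finiteness is automatic for members of M_TS,
   which is inductively generated). *)
Definition mesh := rect -> Prop.

Definition Q0 (M N : nat) : mesh := fun Q =>
  exists m n : nat, (1 <= m <= M)%nat /\ (1 <= n <= N)%nat /\
    Q = mkRect (INR m - 1) (INR n - 1) 1 1.

Definition bisect (j : nat) (q : R) (Q : rect) : mesh := fun S =>
  if Nat.eqb j 1 then
    S = mkRect (rx Q) (ry Q) (q * rw Q) (rh Q) \/
    S = mkRect (rx Q + q * rw Q) (ry Q) (rw Q - q * rw Q) (rh Q)
  else
    S = mkRect (rx Q) (ry Q) (rw Q) (q * rh Q) \/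
    S = mkRect (rx Q) (ry Q + q * rh Q) (rw Q) (rh Q - q * rh Q).

Definition refine (Qs : mesh) (Rc : rect) (j : nat) (q : R) : mesh := fun S =>
  (Qs S /\ S <> Rc) \/ bisect j q Rc S.

Inductive MTS (M N : nat) : mesh -> Prop :=
| MTS_base : MTS M N (Q0 M N)
| MTS_step : forall Qs Rc j q, MTS M N Qs -> Qs Rc -> (j = 1%nat \/ j = 2%nat) ->
    0 < q < 1 -> MTS M N (refine Qs Rc j q).

Definition in_rect (Q : rect) (p : point) : Prop :=
  rx Q <= fst p <= rx Q + rw Q /\ ry Q <= snd p <= ry Q + rh Q.

Definition Vrect (Q : rect) (p : point) : Prop :=
  (fst p = rx Q \/ fst p = rx Q + rw Q) /\ (snd p = ry Q \/ snd p = ry Q + rh Q).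

Definition Vmesh (Qs : mesh) (p : point) : Prop :=
  exists Q, Qs Q /\ Vrect Q p.

Definition Trect (Qs : mesh) (Q : rect) (p : point) : Prop :=
  Vmesh Qs p /\ in_rect Q p /\ ~ Vrect Q p.

Definition Tmesh (Qs : mesh) (p : point) : Prop :=
  exists Q, Qs Q /\ Trect Qs Q p.

(* Every rectangle of a mesh in M_TS has positive sides, and two distinct
   rectangles have disjoint interiors; both properties are preserved by
   bisection.  Hence a T-junction v of Q_v, being a vertex of a neighbouring
   rectangle, lies in the relative interior of an edge of Q_v, and the only
   bisection making v a vertex of both halves cuts Q_v through v perpendicular
   to that edge.  After this cut no rectangle has v as a T-junction: such a
   rectangle would be an old one with v on the open part of one of its edges,
   facing Q_v across a line through v, and then the rectangle having v as a
   corner could not avoid both of them. *)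
From Stdlib Require Import Reals Lra Lia Classical.
Open Scope R_scope.

Definition rect_pos (Q : rect) : Prop := 0 < rw Q /\ 0 < rh Q.

(* Closed rectangles with disjoint interiors are separated along an axis. *)
Definition separated (A B : rect) : Prop :=
  rx B + rw B <= rx A \/ rx A + rw A <= rx B \/
  ry B + rh B <= ry A \/ ry A + rh A <= ry B.

Definition subrect (H Q : rect) : Prop :=
  rx Q <= rx H /\ rx H + rw H <= rx Q + rw Q /\
  ry Q <= ry H /\ ry H + rh H <= ry Q + rh Q.

Record mesh_wf (Qs : mesh) : Prop := {
  mesh_wf_pos : forall A, Qs A -> rect_pos A;
  mesh_wf_sep : forall A B, Qs A -> Qs B -> A <> B -> separated A B }.

Lemma separated_sym A B : separated A B -> separated B A.
Proof. unfold separated; lra. Qed.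

Lemma separated_subrect A Q H : subrect H Q -> separated A Q -> separated A H.
Proof. unfold subrect, separated; lra. Qed.

Section Bisection.

Variables (Q : rect) (j : nat) (q : R).
Hypotheses (HQ : rect_pos Q) (Hj : j = 1%nat \/ j = 2%nat) (Hq : 0 < q < 1).

Lemma bisect_pos_subrect H : bisect j q Q H -> rect_pos H /\ subrect H Q.
Proof.
  destruct HQ as [Hw Hh]; unfold bisect, rect_pos, subrect.
  destruct Hj as [-> | ->]; simpl; intros [-> | ->]; simpl; split; nra.
Qed.

Lemma bisect_separated H H' :
  bisect j q Q H -> bisect j q Q H' -> H <> H' -> separated H H'.
Proof.
  unfold bisect, separated; destruct Hj as [-> | ->]; simpl;
    intros [-> | ->] [-> | ->] Hne; simpl; (congruence || lra).
Qed.

End Bisection.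

Lemma mesh_wf_Q0 M N : mesh_wf (Q0 M N).
Proof.
  split.
  - intros A (m & n & _ & _ & ->); unfold rect_pos; simpl; lra.
  - intros A B (m & n & _ & _ & ->) (m' & n' & _ & _ & ->) Hne.
    assert (Hstep : forall k k' : nat, (k < k')%nat -> INR k + 1 <= INR k')
      by (intros k k' Hk; rewrite <- S_INR; apply le_INR; lia).
    unfold separated; simpl.
    destruct (Nat.lt_total m m') as [Hm | [-> | Hm]];
      [apply Hstep in Hm; lra | | apply Hstep in Hm; lra].
    destruct (Nat.lt_total n n') as [Hn | [-> | Hn]];
      [apply Hstep in Hn; lra | congruence | apply Hstep in Hn; lra].
Qed.

Lemma mesh_wf_refine Qs Rc j q :
  mesh_wf Qs -> Qs Rc -> (j = 1%nat \/ j = 2%nat) -> 0 < q < 1 ->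
  mesh_wf (refine Qs Rc j q).
Proof.
  intros [Hpos Hsep] HR Hj Hq.
  pose proof (bisect_pos_subrect Rc j q (Hpos _ HR) Hj Hq) as Hhalf.
  split.
  - intros A [[HA _] | HA]; [exact (Hpos _ HA) | exact (proj1 (Hhalf _ HA))].
  - intros A B [[HA HAR] | HA] [[HB HBR] | HB] Hne.
    + exact (Hsep _ _ HA HB Hne).
    + destruct (Hhalf _ HB); eapply separated_subrect; eauto.
    + destruct (Hhalf _ HA); apply separated_sym; eapply separated_subrect; eauto.
    + exact (bisect_separated Rc j q Hj A B HA HB Hne).
Qed.

Lemma MTS_mesh_wf M N Qs : MTS M N Qs -> mesh_wf Qs.
Proof.
  induction 1; [apply mesh_wf_Q0 | apply mesh_wf_refine; auto].
Qed.

Definition on_open_horiz_edge (Q : rect) (p : point) : Prop :=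
  rx Q < fst p < rx Q + rw Q /\ (snd p = ry Q \/ snd p = ry Q + rh Q).

Definition on_open_vert_edge (Q : rect) (p : point) : Prop :=
  ry Q < snd p < ry Q + rh Q /\ (fst p = rx Q \/ fst p = rx Q + rw Q).

Definition on_open_edge (Q : rect) (p : point) : Prop :=
  on_open_horiz_edge Q p \/ on_open_vert_edge Q p.

(* A point of Q that is a corner of a rectangle Z separated from Q cannot lie
   in the interior of Q. *)
Lemma Trect_on_open_edge Qs Q p :
  mesh_wf Qs -> Qs Q -> Trect Qs Q p -> on_open_edge Q p.
Proof.
  intros [Hpos Hsep] HQ [[Z [HZ VZ]] [Hin Hnv]].
  assert (HZQ : separated Z Q) by (apply Hsep; auto; intros ->; contradiction).
  destruct (Hpos _ HZ), (Hpos _ HQ).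
  destruct p as [a b].
  unfold on_open_edge, on_open_horiz_edge, on_open_vert_edge, in_rect, Vrect, separated in *;
    simpl in *.
  destruct Hin as [[[I1 | I1] [I2 | I2]] [[I3 | I3] [I4 | I4]]];
  first [ (left; split; [lra | (left; lra) || (right; lra)])
        | (right; split; [lra | (left; lra) || (right; lra)])
        | (exfalso; apply Hnv; split; [(left; lra) || (right; lra)
                                      | (left; lra) || (right; lra)])
        | (exfalso; destruct VZ as [[? | ?] [? | ?]];
           destruct HZQ as [? | [? | [? | ?]]]; lra) ].
Qed.

Definition facing (A B : rect) (p : point) : Prop :=
  (on_open_horiz_edge A p /\ on_open_horiz_edge B p /\
     (ry A + rh A = snd p /\ snd p = ry B \/ ry B + rh B = snd p /\ snd p = ry A)) \/
  (on_open_vert_edge A p /\ on_open_vert_edge B p /\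
     (rx A + rw A = fst p /\ fst p = rx B \/ rx B + rw B = fst p /\ fst p = rx A)).

Lemma open_edges_facing A B p :
  rect_pos A -> rect_pos B -> separated A B ->
  on_open_edge A p -> on_open_edge B p -> facing A B p.
Proof.
  intros [] [] Hsep HA HB.
  unfold facing, on_open_edge, on_open_horiz_edge, on_open_vert_edge, separated in *.
  destruct HA as [[? [? | ?]] | [? [? | ?]]], HB as [[? [? | ?]] | [? [? | ?]]];
    destruct Hsep as [? | [? | [? | ?]]];
    first [ lra | (left; repeat split; lra) | (right; repeat split; lra) ].
Qed.

(* A corner rectangle at p would overlap the side of the common line occupied
   by one of the two facing rectangles. *)
Lemma facing_no_corner A B Z p :
  rect_pos A -> rect_pos B -> rect_pos Z -> facing A B p ->
  separated Z A -> separated Z B -> ~ Vrect Z p.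
Proof.
  intros [] [] [] Hface HZA HZB VZ.
  unfold facing, on_open_horiz_edge, on_open_vert_edge, separated, Vrect in *.
  destruct Hface as [[[? _] [[? _] [[? ?] | [? ?]]]] | [[? _] [[? _] [[? ?] | [? ?]]]]];
    destruct VZ as [[? | ?] [? | ?]];
    destruct HZA as [? | [? | [? | ?]]]; try lra;
    destruct HZB as [? | [? | [? | ?]]]; lra.
Qed.

Lemma Trect_unique Qs A B p :
  mesh_wf Qs -> Qs A -> Qs B -> Trect Qs A p -> Trect Qs B p -> A = B.
Proof.
  intros Hwf HA HB TA TB.
  destruct (classic (A = B)) as [-> | Hne]; [reflexivity | exfalso].
  pose proof TA as [[Z [HZ VZ]] _].
  assert (HZA : Z <> A) by (intros ->; destruct TA as [_ [_ ?]]; contradiction).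
  assert (HZB : Z <> B) by (intros ->; destruct TB as [_ [_ ?]]; contradiction).
  pose proof Hwf as [Hpos Hsep].
  apply (facing_no_corner A B Z p); auto.
  apply open_edges_facing; auto; eapply Trect_on_open_edge; eauto.
Qed.

Lemma bisect_vertices_horiz Q p j q :
  rect_pos Q -> on_open_horiz_edge Q p -> (j = 1%nat \/ j = 2%nat) -> 0 < q < 1 ->
  (forall Q', bisect j q Q Q' -> Vrect Q' p) <-> j = 1%nat /\ q * rw Q = fst p - rx Q.
Proof.
  intros [Hw Hh] [Ha Hb] Hj Hq; unfold bisect, Vrect; split.
  - intros Hv; destruct Hj as [-> | ->]; simpl in Hv;
      destruct (Hv _ (or_introl eq_refl)) as [[? | ?] [? | ?]]; simpl in *;
      (split; [reflexivity | lra]) || lra.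
  - intros [-> Hqw] Q' [-> | ->]; simpl; split; lra.
Qed.

Lemma bisect_vertices_vert Q p j q :
  rect_pos Q -> on_open_vert_edge Q p -> (j = 1%nat \/ j = 2%nat) -> 0 < q < 1 ->
  (forall Q', bisect j q Q Q' -> Vrect Q' p) <-> j = 2%nat /\ q * rh Q = snd p - ry Q.
Proof.
  intros [Hw Hh] [Hb Ha] Hj Hq; unfold bisect, Vrect; split.
  - intros Hv; destruct Hj as [-> | ->]; simpl in Hv;
      destruct (Hv _ (or_introl eq_refl)) as [[? | ?] [? | ?]]; simpl in *;
      (split; [reflexivity | lra]) || lra.
  - intros [-> Hqh] Q' [-> | ->]; simpl; split; lra.
Qed.

Lemma bisection_through_unique Q p :
  rect_pos Q -> on_open_edge Q p ->
  exists! jq : nat * R,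
    (fst jq = 1%nat \/ fst jq = 2%nat) /\ 0 < snd jq < 1 /\
    (forall Q', bisect (fst jq) (snd jq) Q Q' -> Vrect Q' p).
Proof.
  intros HQ Hedge; pose proof HQ as [Hw Hh].
  destruct Hedge as [Hhe | Hve].
  - pose proof Hhe as [Ha _].
    set (q := (fst p - rx Q) / rw Q).
    assert (Hqw : q * rw Q = fst p - rx Q) by (unfold q; field; lra).
    assert (Hq : 0 < q < 1) by (split; nra).
    exists (1%nat, q); simpl; split.
    + split; [left; reflexivity |]; split; [exact Hq |].
      apply (bisect_vertices_horiz Q p); auto.
    + intros [j' q'] (Hj' & Hq' & Hv); simpl in *.
      apply (bisect_vertices_horiz Q p j' q') in Hv as [-> Hq'w]; auto.
      f_equal; apply (Rmult_eq_reg_r (rw Q)); lra.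
  - pose proof Hve as [Hb _].
    set (q := (snd p - ry Q) / rh Q).
    assert (Hqh : q * rh Q = snd p - ry Q) by (unfold q; field; lra).
    assert (Hq : 0 < q < 1) by (split; nra).
    exists (2%nat, q); simpl; split.
    + split; [right; reflexivity |]; split; [exact Hq |].
      apply (bisect_vertices_vert Q p); auto.
    + intros [j' q'] (Hj' & Hq' & Hv); simpl in *.
      apply (bisect_vertices_vert Q p j' q') in Hv as [-> Hq'h]; auto.
      f_equal; apply (Rmult_eq_reg_r (rh Q)); lra.
Qed.

Lemma refine_clears_Tjunction Qs Qv j q v :
  mesh_wf Qs -> Qs Qv -> Trect Qs Qv v ->
  (forall Q', bisect j q Qv Q' -> Vrect Q' v) -> ~ Tmesh (refine Qs Qv j q) v.
Proof.
  intros Hwf HQ HT Hv (S & [[HS HSne] | Hhalf] & _ & Hin & Hnv).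
  - apply HSne, (Trect_unique Qs S Qv v); auto.
    split; [apply HT | auto].
  - exact (Hnv (Hv _ Hhalf)).
Qed.

Theorem mainTheorem2 (M N : nat) (Qs : mesh) (v : point) (Qv : rect) :
  MTS M N Qs -> Tmesh Qs v -> Qs Qv -> Trect Qs Qv v ->
  (exists! jq : nat * R,
      (fst jq = 1%nat \/ fst jq = 2%nat) /\ 0 < snd jq < 1 /\
      (forall Q', bisect (fst jq) (snd jq) Qv Q' -> Vrect Q' v)) /\
  (forall (j : nat) (q : R),
      (j = 1%nat \/ j = 2%nat) -> 0 < q < 1 ->
      (forall Q', bisect j q Qv Q' -> Vrect Q' v) ->
      MTS M N (refine Qs Qv j q) /\ ~ Tmesh (refine Qs Qv j q) v).
Proof.
  intros HM _ HQ HT.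
  pose proof (MTS_mesh_wf M N Qs HM) as Hwf.
  split.
  - apply bisection_through_unique.
    + exact (mesh_wf_pos Qs Hwf Qv HQ).
    + exact (Trect_on_open_edge Qs Qv v Hwf HQ HT).
  - intros j q Hj Hq Hv; split.
    + apply MTS_step; auto.
    + exact (refine_clears_Tjunction Qs Qv j q v Hwf HQ HT Hv).
Qed.
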